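(* Let $C\in\mathbb{R}^{n\times n}$ be symmetric and let $Z$ be an optimal solution of $$\max_{Z}\ \langle C,Z\rangle\quad\text{s.t. } Z_{ii}=1\ (i=1,\dots,n),\ Z\succeq0.$$ Define $w\in\mathbb{R}^n$ by $w_i=\dfrac{Z_i^TZC_i}{Z_i^TZ_i}$ for $i=1,\dots,n$. Then $w$ is an optimal solution of $$\min_{w\in\mathbb{R}^n}\ \mathbf{1}^Tw\quad\text{s.t. } \operatorname{Diag}(w)\succeq C.$$
   Context: $Z_i$ and $C_i$ denote the $i$-th columns of $Z$ and $C$ (equivalently rows, by symmetry); $\operatorname{Diag}(w)$ is the diagonal matrix with diagonal $w$; $\langle C,Z\rangle=\operatorname{tr}(CZ)$; $\mathbf 1$ is the all-ones vector. *)

From HB Require Import structures.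
From mathcomp Require Import all_boot all_order all_algebra.
From mathcomp Require Export reals.
Set Implicit Arguments. Unset Strict Implicit. Unset Printing Implicit Defensive.
Import Order.TTheory GRing.Theory Num.Theory.
Local Open Scope ring_scope.

Definition psd (R : realType) (n : nat) (A : 'M[R]_n) : Prop :=
  A^T = A /\ forall x : 'cV[R]_n, 0 <= (x^T *m A *m x) 0 0.

Definition frob (R : realType) (n : nat) (C Z : 'M[R]_n) : R := \tr (C *m Z).

Definition primal_feasible (R : realType) (n : nat) (Z : 'M[R]_n) : Prop :=
  (forall i, Z i i = 1) /\ psd Z.

Definition primal_optimal (R : realType) (n : nat) (C Z : 'M[R]_n) : Prop :=
  primal_feasible Z /\
  forall Z' : 'M[R]_n, primal_feasible Z' -> frob C Z' <= frob C Z.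

Definition dual_feasible (R : realType) (n : nat) (C : 'M[R]_n) (w : 'rV[R]_n)
  : Prop := psd (diag_mx w - C).

Definition ones_dot (R : realType) (n : nat) (w : 'rV[R]_n) : R := \sum_i w 0 i.

Definition dual_optimal (R : realType) (n : nat) (C : 'M[R]_n) (w : 'rV[R]_n)
  : Prop :=
  dual_feasible C w /\
  forall w' : 'rV[R]_n, dual_feasible C w' -> ones_dot w <= ones_dot w'.

Definition w_of (R : realType) (n : nat) (C Z : 'M[R]_n) : 'rV[R]_n :=
  \row_i (((col i Z)^T *m Z *m col i C) 0 0 / ((col i Z)^T *m col i Z) 0 0).

(* Let l_j := (Z C)_jj and S := Diag(l) - C.  Every feasible G has unit diagonal,
   so tr(S G) = <C,Z> - <C,G>: optimality of Z says tr(S G) >= 0 on the feasible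
   set, with equality at Z, and feasibility of Z gives diag(Z S) = 0.
   For x and small t > 0 the matrix Diag(c) Z Diag(c) + t x x^T, with
   c_j = sqrt(1 - t x_j^2), is feasible; since diag(Z S) = 0 the first-order terms
   of the diagonal scaling vanish, so tr(S .) of it is t x^T S x + O(t^2), whence
   S is psd.  Writing Z as a sum of rank-one terms v v^T, tr(S Z) = 0 forces
   v^T S v = 0, hence S v = 0, for each of them: Z S = 0.  Thus Z C_i = l_i Z_i,
   i.e. w = l, which is dual feasible, and weak duality tr((Diag(w') - C) Z) >= 0
   gives 1^T w' >= <C,Z> = 1^T l for every dual feasible w'. *)

From HB Require Import structures.
From mathcomp Require Import all_boot all_order all_algebra.
From mathcomp Require Import reals.
From mathcomp Require Import ring lra.
Set Implicit Arguments. Unset Strict Implicit. Unset Printing Implicit Defensive.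
Import Order.TTheory GRing.Theory Num.Theory.
Local Open Scope ring_scope.

Lemma nonneg_quadratic_discr (R : realFieldType) (a b c : R) :
  0 <= c -> (forall t, 0 <= a + 2 * t * b + t ^+ 2 * c) -> b ^+ 2 <= a * c.
Proof.
move=> c_ge0 qge0; have [c_gt0 | c_le0] := ltrP 0 c.
  have := qge0 (- (b / c)); have : b / c * c = b by rewrite divfK ?gt_eqF.
  move: (b / c) => u; nra.
have -> : c = 0 by apply/eqP; rewrite eq_le c_le0 c_ge0.
have [-> | b_neq0] := eqVneq b 0; first by rewrite expr0n mulr0.
have := qge0 (- ((a + 1) / (2 * b))).
have : (a + 1) / (2 * b) * (2 * b) = a + 1 by rewrite divfK ?mulf_neq0 ?pnatr_eq0.
move: ((a + 1) / (2 * b)) => u; nra.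
Qed.

Lemma first_order_coef_ge0 (R : realFieldType) (q K t0 : R) :
  0 < t0 -> (forall t, 0 < t <= t0 -> 0 <= t * q + t ^+ 2 * K) -> 0 <= q.
Proof.
move=> t0_gt0 small; rewrite leNgt; apply/negP => q_lt0.
set t := Order.min t0 (- q / (`|K| + 1)).
have K1_gt0 : 0 < `|K| + 1 by rewrite ltr_pwDr ?normr_ge0.
have t_gt0 : 0 < t by rewrite lt_min t0_gt0 divr_gt0 ?oppr_gt0.
have tK : t * (`|K| + 1) <= - q.
  by rewrite -ler_pdivlMr // ge_min lexx orbT.
have := small t; rewrite t_gt0 ge_min lexx /= => /(_ isT).
have := ler_norm K; nra.
Qed.

Section Bform.
Variables (R : comPzRingType) (n : nat).
Implicit Types (A B : 'M[R]_n) (x y u : 'cV[R]_n).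

Definition bform A x y : R := (x^T *m A *m y) 0 0.

Lemma bformDl A x1 x2 y : bform A (x1 + x2) y = bform A x1 y + bform A x2 y.
Proof. by rewrite /bform linearD !mulmxDl mxE. Qed.

Lemma bformDr A x y1 y2 : bform A x (y1 + y2) = bform A x y1 + bform A x y2.
Proof. by rewrite /bform !mulmxDr mxE. Qed.

Lemma bformZl A a x y : bform A (a *: x) y = a * bform A x y.
Proof. by rewrite /bform linearZ -!scalemxAl mxE. Qed.

Lemma bformZr A a x y : bform A x (a *: y) = a * bform A x y.
Proof. by rewrite /bform -!scalemxAr mxE. Qed.

Lemma bformBl A B x y : bform (A - B) x y = bform A x y - bform B x y.
Proof. by rewrite /bform mulmxBr mulmxBl [LHS]mxE [X in _ + X]mxE. Qed.

Lemma bformC A x y : A^T = A -> bform A x y = bform A y x.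
Proof.
move=> sA; rewrite /bform -[in LHS](trmxK (x^T *m A *m y)) mxE.
by rewrite !trmx_mul trmxK sA mulmxA.
Qed.

Lemma bform_deltal A j y : bform A (delta_mx j 0) y = (A *m y) j 0.
Proof. by rewrite /bform trmx_delta -mulmxA -rowE mxE. Qed.

Lemma bform_delta A j k : bform A (delta_mx j 0) (delta_mx k 0) = A j k.
Proof. by rewrite bform_deltal -colE !mxE. Qed.

Lemma bform_congr A B x y : bform (B^T *m A *m B) x y = bform A (B *m x) (B *m y).
Proof. by rewrite /bform trmx_mul !mulmxA. Qed.

Lemma bform_rank1 u x y : bform (u *m u^T) x y = (u^T *m x) 0 0 * (u^T *m y) 0 0.
Proof.
rewrite /bform mulmxA -mulmxA [LHS]mxE big_ord1.
by rewrite -[x^T *m u]trmxK trmx_mul trmxK mxE.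
Qed.

Lemma mxtrace_mul_rank1 A u : \tr (A *m (u *m u^T)) = bform A u u.
Proof. by rewrite mulmxA mxtrace_mulC trace_mx11 /bform mulmxA. Qed.

End Bform.

Section Psd.
Variables (R : realType) (n : nat).
Implicit Types (A B : 'M[R]_n) (x y u : 'cV[R]_n).

Lemma psd_bform_ge0 A x : psd A -> 0 <= bform A x x.
Proof. by case=> _; apply. Qed.

Lemma psd_cauchy_schwarz A x y : psd A -> bform A x y ^+ 2 <= bform A x x * bform A y y.
Proof.
move=> [sA A_ge0]; apply: nonneg_quadratic_discr => [|t]; first exact: A_ge0.
have := A_ge0 (x + t *: y); rewrite -/(bform A _ _).
rewrite !(bformDl, bformDr, bformZl, bformZr) [bform A y x]bformC //.
by congr (_ <= _); ring.
Qed.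

Lemma psd_bform_eq0 A x : psd A -> bform A x x = 0 -> A *m x = 0.
Proof.
move=> psdA Ax0; apply/matrixP => k j; rewrite (ord1 j) [RHS]mxE -bform_deltal.
have := psd_cauchy_schwarz (delta_mx k 0) x psdA; rewrite Ax0 mulr0 => le0.
by apply/eqP; rewrite -sqrf_eq0 eq_le le0 sqr_ge0.
Qed.

Lemma psd_diag_ge0 A j : psd A -> 0 <= A j j.
Proof. by move=> psdA; rewrite -bform_delta psd_bform_ge0. Qed.

Lemma psd_diag0_col0 A j k : psd A -> A j j = 0 -> A k j = 0.
Proof.
move=> psdA Ajj0; have := psd_bform_eq0 (x := delta_mx j 0) psdA.
by rewrite bform_delta => /(_ Ajj0)/matrixP/(_ k 0); rewrite -colE !mxE.
Qed.

Lemma psd_add A B : psd A -> psd B -> psd (A + B).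
Proof.
move=> [sA A_ge0] [sB B_ge0]; split; first by rewrite linearD /= sA sB.
by move=> x; rewrite mulmxDr mulmxDl mxE addr_ge0.
Qed.

Lemma psd_congr A B : psd A -> psd (B^T *m A *m B).
Proof.
move=> [sA A_ge0]; split; first by rewrite !trmx_mul trmxK sA mulmxA.
by move=> x; rewrite -/(bform _ x x) bform_congr; apply: A_ge0.
Qed.

Lemma psd_rank1 u : psd (u *m u^T).
Proof.
split=> [|x]; first by rewrite trmx_mul trmxK.
by rewrite -/(bform _ x x) bform_rank1 -expr2 sqr_ge0.
Qed.

End Psd.

Section RankOneDecomposition.
Variables (R : realType) (n : nat).
Implicit Types (P Z : 'M[R]_n).

Definition pivot_col Z j : 'cV[R]_n := (Num.sqrt (Z j j))^-1 *: col j Z.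

Lemma pivot_col_rank1E Z j k l : 0 <= Z j j ->
  (pivot_col Z j *m (pivot_col Z j)^T) k l = Z k j * Z l j / Z j j.
Proof.
move=> Zjj_ge0; rewrite mxE big_ord1 !mxE.
by rewrite mulrACA -invfM -expr2 sqr_sqrtr // mulrC.
Qed.

Lemma psd_sub_pivot Z j : psd Z -> 0 < Z j j ->
  psd (Z - pivot_col Z j *m (pivot_col Z j)^T).
Proof.
move=> psdZ Zjj_gt0; have [sZ _] := psdZ; split.
  by rewrite linearB /= trmx_mul trmxK sZ.
move=> x; rewrite -/(bform _ x x) bformBl bform_rank1 -expr2 subr_ge0.
have -> : ((pivot_col Z j)^T *m x) 0 0 = (Num.sqrt (Z j j))^-1 * bform Z (delta_mx j 0) x.
  by rewrite /pivot_col linearZ /= -scalemxAl mxE colE /bform trmx_mul sZ.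
have s2 : Num.sqrt (Z j j) ^+ 2 = Z j j by rewrite sqr_sqrtr ?ltW.
rewrite exprMn_comm ?exprVn ?s2; last exact: mulrC.
rewrite mulrC ler_pdivrMr // -[Z j j]bform_delta mulrC.
exact: psd_cauchy_schwarz.
Qed.

Lemma pivot_diag_eq0 Z j k : psd Z -> 0 < Z j j -> (k == j) || (Z k k == 0) ->
  (Z - pivot_col Z j *m (pivot_col Z j)^T) k k = 0.
Proof.
move=> psdZ Zjj_gt0 k_killed; rewrite [LHS]mxE [X in _ + X]mxE.
rewrite pivot_col_rank1E ?ltW //; apply/eqP; rewrite subr_eq0; apply/eqP.
case/orP: k_killed => [/eqP -> | /eqP Zkk0]; first by rewrite mulfK ?gt_eqF.
have Zkj0 : Z k j = 0 by rewrite -{1}(proj1 psdZ) mxE psd_diag0_col0.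
by rewrite Zkk0 Zkj0 !mul0r.
Qed.

Lemma psd_diag0_eq0 Z : psd Z -> (forall j, Z j j = 0) -> Z = 0.
Proof.
by move=> psdZ diag0; apply/matrixP => k j; rewrite mxE psd_diag0_col0.
Qed.

Lemma psd_sum_rank1 Z : psd Z -> exists vs : seq 'cV[R]_n, Z = \sum_(v <- vs) v *m v^T.
Proof.
suff: forall m Z, psd Z -> (#|[set j | Z j j != 0%R]| <= m)%N ->
    exists vs : seq 'cV[R]_n, Z = \sum_(v <- vs) v *m v^T.
  by move=> decomp psdZ; apply: decomp psdZ (leqnn _).
elim=> [|m IHm] {}Z psdZ supp_le.
all: have [j /= Zjj_neq0 | diag0] := pickP (fun j => Z j j != 0).
all: try by exists [::]; rewrite big_nil; apply: psd_diag0_eq0 => // k; apply/eqP/negbFE/diag0.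
  by move: supp_le; rewrite leqn0 cards_eq0 => /eqP/setP/(_ j); rewrite !inE Zjj_neq0.
have Zjj_gt0 : 0 < Z j j by rewrite lt_def Zjj_neq0 psd_diag_ge0.
set u := pivot_col Z j.
set Z' := Z - u *m u^T.
have supp_lt : (#|[set k | Z' k k != 0%R]| < #|[set k | Z k k != 0%R]|)%N.
  apply/proper_card/properP; split; last by exists j; rewrite !inE ?pivot_diag_eq0 ?eqxx.
  apply/subsetP => k; rewrite !inE; apply: contraNN => Zkk0.
  by rewrite pivot_diag_eq0 ?Zkk0 ?orbT.
have [vs Zvs] := IHm Z' (psd_sub_pivot psdZ Zjj_gt0) (leq_trans supp_lt supp_le).
by exists (u :: vs); rewrite big_cons -Zvs addrC subrK.
Qed.

Lemma mxtrace_mul_sum_rank1 P (vs : seq 'cV[R]_n) :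
  \tr (P *m \sum_(v <- vs) v *m v^T) = \sum_(v <- vs) bform P v v.
Proof.
rewrite mulmx_sumr raddf_sum; apply: eq_bigr => v _; exact: mxtrace_mul_rank1.
Qed.

Lemma mxtrace_psd_ge0 P Z : psd P -> psd Z -> 0 <= \tr (P *m Z).
Proof.
move=> psdP /psd_sum_rank1 [vs ->]; rewrite mxtrace_mul_sum_rank1.
by apply: sumr_ge0 => v _; apply: psd_bform_ge0.
Qed.

Lemma mxtrace_psd_eq0 P Z : psd P -> psd Z -> \tr (P *m Z) = 0 -> P *m Z = 0.
Proof.
move=> psdP /psd_sum_rank1 [vs ->]; rewrite mxtrace_mul_sum_rank1 => /eqP.
rewrite psumr_eq0 => [/allP Pv0|v _]; last exact: psd_bform_ge0.
rewrite mulmx_sumr big_seq big1 // => v /Pv0 /eqP/(psd_bform_eq0 psdP) Pv.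
by rewrite mulmxA Pv mul0mx.
Qed.

End RankOneDecomposition.

Lemma sqrtr_mulrr (R : rcfType) (u : R) : 0 <= u -> Num.sqrt u * Num.sqrt u = u.
Proof. by move=> u_ge0; rewrite -expr2 sqr_sqrtr. Qed.

Lemma sqrt_1B_bounds (R : rcfType) (u : R) : 0 <= u <= 1 -> 0 <= 1 - Num.sqrt (1 - u) <= u.
Proof.
case/andP=> u_ge0 u_le1; have s2 : Num.sqrt (1 - u) ^+ 2 = 1 - u by rewrite sqr_sqrtr ?subr_ge0.
have s_ge0 := sqrtr_ge0 (1 - u).
have s_le1 : Num.sqrt (1 - u) <= 1.
  by rewrite -[X in _ <= X](sqrtr1 R) ler_wsqrtr // lerBlDr lerDl.
apply/andP; split; first by rewrite subr_ge0.
nra.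
Qed.

Section DiagonalCongruence.
Variables (R : numDomainType) (n : nat).
Implicit Types (A S Z : 'M[R]_n) (e : 'rV[R]_n).

Lemma mxtrace_diag_mul_unitdiag A e : (forall j, A j j = 1) ->
  \tr (diag_mx e *m A) = \sum_j e 0 j.
Proof. by move=> A1; apply: eq_bigr => j _; rewrite mul_diag_mx mxE A1 mulr1. Qed.

Lemma mxtrace_mul_diag_eq0 A e : (forall k, A k k = 0) -> \tr (A *m diag_mx e) = 0.
Proof.
by move=> A0; apply: big1 => k _; rewrite mul_mx_diag mxE A0 mul0r.
Qed.

Lemma mxtrace_diag_congr_1B S Z c : S^T = S -> Z^T = Z -> (forall k, (Z *m S) k k = 0) ->
  \tr (S *m (diag_mx c *m Z *m diag_mx c))
  = \tr (S *m (diag_mx (const_mx 1 - c) *m Z *m diag_mx (const_mx 1 - c))).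
Proof.
move=> sS sZ ZS0.
have -> : diag_mx c = 1%:M - diag_mx (const_mx 1 - c) by rewrite linearB /= diag_const_mx subKr.
move: (const_mx 1 - c) => e; set E := diag_mx e.
have SZ0 k : (S *m Z) k k = 0 by rewrite -[S]sS -[Z]sZ -trmx_mul mxE.
have trSZ : \tr (S *m Z) = 0 by apply: big1 => k _; apply: SZ0.
have trSEZ : \tr (S *m (E *m Z)) = 0.
  by rewrite mulmxA mxtrace_mulC mulmxA mxtrace_mul_diag_eq0.
have trSZE : \tr (S *m (Z *m E)) = 0 by rewrite mulmxA mxtrace_mul_diag_eq0.
rewrite mulmxBl mul1mx !mulmxBr mulmx1 mulmxBl !mulmxBr !raddfB /= trSZ trSEZ.
by rewrite -!mulmxA trSZE; ring.
Qed.

Lemma mxtrace_diag_congr_bound S Z e b : (forall j, `|e 0 j| <= b) ->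
  `|\tr (S *m (diag_mx e *m Z *m diag_mx e))|
    <= b ^+ 2 * \sum_j \sum_k `|S j k * Z k j|.
Proof.
move=> e_le; rewrite mulr_sumr; apply: le_trans (ler_norm_sum _ _ _) _.
apply: ler_sum => j _; rewrite mxE mulr_sumr; apply: le_trans (ler_norm_sum _ _ _) _.
apply: ler_sum => k _; rewrite mul_mx_diag mxE mul_diag_mx mxE.
have -> : S j k * (e 0 k * Z k j * e 0 j) = (e 0 k * e 0 j) * (S j k * Z k j) by ring.
rewrite normrM ler_wpM2r ?normr_ge0 // normrM expr2.
by rewrite ler_pM ?normr_ge0.
Qed.

End DiagonalCongruence.

Lemma weak_duality (R : realType) n (C G : 'M[R]_n) (w : 'rV[R]_n) :
  primal_feasible G -> dual_feasible C w -> frob C G <= ones_dot w.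
Proof.
move=> [G1 psdG] psdS; have := mxtrace_psd_ge0 psdS psdG.
by rewrite mulmxBl raddfB /= mxtrace_diag_mul_unitdiag // subr_ge0.
Qed.

Section Perturbation.
Variables (R : realType) (n : nat).
Implicit Types (Z : 'M[R]_n) (x : 'cV[R]_n) (t : R).

Definition perturb_scale x t : 'rV[R]_n := \row_j Num.sqrt (1 - t * x j 0 ^+ 2).

Definition perturb Z x t : 'M[R]_n :=
  diag_mx (perturb_scale x t) *m Z *m diag_mx (perturb_scale x t)
  + (Num.sqrt t *: x) *m (Num.sqrt t *: x)^T.

Lemma primal_feasible_perturb Z x t : primal_feasible Z -> 0 <= t ->
  (forall j, t * x j 0 ^+ 2 <= 1) -> primal_feasible (perturb Z x t).
Proof.
move=> [Z1 psdZ] t_ge0 tx_le1; split=> [j|].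
  rewrite [LHS]mxE mul_mx_diag mxE mul_diag_mx mxE Z1 mulr1 [(_ *m _^T) _ _]mxE.
  rewrite big_ord1 !mxE mulrACA !sqrtr_mulrr ?subrK ?subr_ge0 //.
apply: psd_add; last exact: psd_rank1.
by rewrite -[M in M *m Z]tr_diag_mx; apply: psd_congr.
Qed.

End Perturbation.

Section OptimalSolution.
Variables (R : realType) (n : nat) (C Z : 'M[R]_n).
Hypotheses (sC : C^T = C) (Zopt : primal_optimal C Z).

Definition diagZC : 'rV[R]_n := \row_j (Z *m C) j j.
Definition slack : 'M[R]_n := diag_mx diagZC - C.

Lemma sum_diagZC : \sum_j diagZC 0 j = frob C Z.
Proof. by rewrite /frob mxtrace_mulC; apply: eq_bigr => j _; rewrite mxE. Qed.

Lemma mxtrace_slack G : primal_feasible G -> \tr (slack *m G) = frob C Z - frob C G.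
Proof.
by case=> G1 _; rewrite mulmxBl raddfB /= mxtrace_diag_mul_unitdiag // sum_diagZC.
Qed.

Lemma mxtrace_slack_ge0 G : primal_feasible G -> 0 <= \tr (slack *m G).
Proof.
by move=> feasG; rewrite mxtrace_slack // subr_ge0; apply: (proj2 Zopt).
Qed.

Lemma slack_sym : slack^T = slack.
Proof. by rewrite linearB /= tr_diag_mx sC. Qed.

Lemma diag_Z_slack k : (Z *m slack) k k = 0.
Proof.
have [[Z1 _] _] := Zopt.
by rewrite mulmxBr mul_mx_diag [LHS]mxE [X in _ + X]mxE !mxE Z1 mul1r subrr.
Qed.

Lemma psd_slack : psd slack.
Proof.
have [[_ psdZ] _] := Zopt; have sZ := proj1 psdZ.
split=> [|x]; first exact: slack_sym.
rewrite -/(bform _ x x); set X := \sum_j x j 0 ^+ 2.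
set K := \sum_j \sum_k `|slack j k * Z k j|.
have X_ge0 : 0 <= X by apply: sumr_ge0 => j _; apply: sqr_ge0.
have x2_le j : x j 0 ^+ 2 <= X.
  by rewrite /X (bigD1 j) //= lerDl sumr_ge0 // => k _; apply: sqr_ge0.
apply: (@first_order_coef_ge0 _ _ (X ^+ 2 * K) (1 + X)^-1) => [|t /andP[t_gt0 t_le]].
  by rewrite invr_gt0 ltr_pwDl.
have tX_le1 : t * X <= 1.
  have : t * (1 + X) <= 1 by rewrite -ler_pdivlMr ?div1r ?ltr_pwDl.
  rewrite mulrDr mulr1; lra.
have tx_ge0 j : 0 <= t * x j 0 ^+ 2 by rewrite mulr_ge0 ?sqr_ge0 // ltW.
have tx_le j : t * x j 0 ^+ 2 <= t * X by rewrite ler_pM2l ?x2_le.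
have tx_le1 j : t * x j 0 ^+ 2 <= 1 := le_trans (tx_le j) tX_le1.
have := mxtrace_slack_ge0 (primal_feasible_perturb (proj1 Zopt) (ltW t_gt0) tx_le1).
rewrite /perturb; set c := perturb_scale x t => trG.
rewrite mulmxDr raddfD /= (mxtrace_diag_congr_1B c slack_sym sZ diag_Z_slack) in trG.
rewrite mxtrace_mul_rank1 bformZl bformZr mulrA sqrtr_mulrr in trG; last exact: ltW.
have e_le j : `|(const_mx 1 - c) 0 j| <= t * X.
  have u_bounds : 0 <= t * x j 0 ^+ 2 <= 1 by rewrite tx_ge0 tx_le1.
  have /andP[e_ge0 e_le] := sqrt_1B_bounds u_bounds.
  by rewrite !mxE ger0_norm // (le_trans e_le).
have := mxtrace_diag_congr_bound slack Z e_le; rewrite -/K exprMn -mulrA.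
move: trG; set a := \tr _ => trG a_le; have := ler_norm a; lra.
Qed.

Lemma Z_slack_eq0 : Z *m slack = 0.
Proof.
have [[_ psdZ] _] := Zopt.
have slackZ0 : slack *m Z = 0.
  apply: mxtrace_psd_eq0 psd_slack psdZ _.
  by rewrite mxtrace_slack ?subrr //; apply: (proj1 Zopt).
by rewrite -[Z](proj1 psdZ) -slack_sym -trmx_mul slackZ0 trmx0.
Qed.

Lemma w_of_diagZC : w_of C Z = diagZC.
Proof.
have [[Z1 _] _] := Zopt.
have ZC : Z *m C = Z *m diag_mx diagZC.
  by apply/eqP; rewrite eq_sym -subr_eq0 -mulmxBr Z_slack_eq0.
apply/rowP => i; rewrite [LHS]mxE.
have ZCi : Z *m col i C = diagZC 0 i *: col i Z.
  rewrite colE mulmxA -colE ZC; apply/matrixP => k l.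
  rewrite [LHS]mxE mul_mx_diag mxE; move: (diagZC 0 i) => d.
  by rewrite !mxE mulrC.
have den_ge1 : 1 <= ((col i Z)^T *m col i Z) 0 0.
  rewrite mxE (bigD1 i) //= !mxE Z1 mulr1 lerDl.
  by apply: sumr_ge0 => k _; rewrite !mxE -expr2 sqr_ge0.
by rewrite -mulmxA ZCi -scalemxAr mxE mulfK // gt_eqF // (lt_le_trans ltr01).
Qed.

End OptimalSolution.

Theorem lemmaC1 (R : realType) (n : nat) (C Z : 'M[R]_n) :
  C^T = C -> primal_optimal C Z -> dual_optimal C (w_of C Z).
Proof.
move=> sC Zopt; rewrite w_of_diagZC //; split; first exact: psd_slack.
by move=> w' /(weak_duality (proj1 Zopt)); rewrite /ones_dot sum_diagZC.
Qed.
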